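(* Let $A$ be a formula of $\mathbf{L_1}$ and let a branch $A=C_0,C_1,\dots,C_m$ of a tableau for $A$ end with a Hintikka formula $C_m$. Then every $C_i$ is a positive part of $C_m$, $\vdash_H C_i\supset C_{i+1}$ for each $i<m$, and $\dashv_H C_i$ for every $i\le m$.
   Context: Formulas of $\mathbf{L_1}$: built from atomic formulas $\epsilon ab$ ($a,b$ name variables, possibly equal) with primitive connectives $\vee,\sim$; $\wedge,\supset,\equiv$ defined as usual. Disjunctions may be associated in any way. $\vdash_H A$: $A$ belongs to the smallest set containing all instances of classical propositional tautologies and all formulas $\epsilon ab\supset\epsilon aa$, $(\epsilon ab\wedge\epsilon bc)\supset\epsilon ac$, $(\epsilon ab\wedge\epsilon bb)\supset\epsilon ba$, closed under modus ponens. Positive/negative parts (occurrences): $A$ is a positive part of $A$; if $B\vee C$ is a positive part then $B,C$ are positive parts; if $\sim B$ is a positive part then $B$ is a negative part; if $\sim B$ is a negative part then $B$ is a positive part. $F[B_+]$ ($G[B_-]$) denotes a formula with a specified occurrence of $B$ as positive (negative) part; $F[B_+,C_-]$ etc. denote specified non-overlapping occurrences. Tableaux: reduction rules ($\vee_-$) $G[B\vee C_-]$ $\mapsto$ two branches $G[B\vee C_-]\vee\sim B$, $G[B\vee C_-]\vee\sim C$; ($\epsilon_1$) $G[\epsilon ab_-]\mapsto G[\epsilon ab_-]\vee\sim\epsilon aa$; ($\epsilon_2$) $G[\epsilon ab_-,\epsilon bc_-]\mapsto G[\epsilon ab_-,\epsilon bc_-]\vee\sim\epsilon ac$; ($\epsilon_{3b}$)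 $G[\epsilon ab_-,\epsilon bb_-]\mapsto G[\epsilon ab_-,\epsilon bb_-]\vee\sim\epsilon ba$. A tableau for $A$ is a finite tree with root $A$ whose non-leaf nodes have as children the result of applying one rule. Hintikka formula: a formula $H$ such that (1) $H$ is not of the form $F[B_+,B_-]$; (2) if $B\vee C$ is a negative part of $H$ then $B$ or $C$ is; (3) if $\epsilon ab$ is a negative part then so is $\epsilon aa$; (4) if $\epsilon ab,\epsilon bc$ are negative parts then so is $\epsilon ac$; (5) if $\epsilon ab,\epsilon bb$ are negative parts then so is $\epsilon ba$. $\mathbf{HAR}$: fix a name variable $a_0$; $\dashv_H$ is the smallest set such that $\dashv_H\epsilon a_0a_0$; $\dashv_H\sim\epsilon a_0a_0$; if $\vdash_H A\supset B$ and $\dashv_H B$ then $\dashv_H A$; if $\dashv_H A$ and $A$ is obtained from $B$ by uniform substitution of name variables for name variables then $\dashv_H B$; if $A$ is a Hintikka formula that is a disjunction of atomic or negated atomic formulas, $\dashv_H A$, and $\epsilon ab$ is not a negative part of $A$, then $\dashv_H A\vee\epsilon ab$. *)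

From Stdlib Require Import List.
Import ListNotations.

Inductive form : Type :=
| Eps : nat -> nat -> form
| Or  : form -> form -> form
| Neg : form -> form.

Definition Imp (A B : form) : form := Or (Neg A) B.
Definition And (A B : form) : form := Neg (Or (Neg A) (Neg B)).
Definition Equiv (A B : form) : form := And (Imp A B) (Imp B A).

(* Truth-value semantics treating atomic formulas as propositional variables;
   a formula is an instance of a classical propositional tautology iff it is
   true under every assignment of truth values to its atomic formulas. *)
Fixpoint eval (v : nat -> nat -> bool) (A : form) : bool :=
  match A with
  | Eps a b => v a b
  | Or B C => eval v B || eval v C
  | Neg B => negb (eval v B)
  end.

Definition taut_instance (A : form) : Prop := forall v, eval v A = true.

Inductive provH : form -> Prop :=
| pH_taut : forall A, taut_instance A -> provH A
| pH_ax1 : forall a b, provH (Imp (Eps a b) (Eps a a))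
| pH_ax2 : forall a b c, provH (Imp (And (Eps a b) (Eps b c)) (Eps a c))
| pH_ax3 : forall a b, provH (Imp (And (Eps a b) (Eps b b)) (Eps b a))
| pH_mp : forall A B, provH (Imp A B) -> provH A -> provH B.

(* Occurrences are identified by paths from the root. *)
Inductive dir : Type := dL | dR | dN.
Definition path := list dir.

(* part F p B s : the occurrence of B at path p in F is a positive part
   (s = true) resp. a negative part (s = false) of F, following the
   inductive definition of positive/negative parts. *)
Inductive part (F : form) : path -> form -> bool -> Prop :=
| part_root : part F [] F true
| part_orL : forall p B C, part F p (Or B C) true -> part F (p ++ [dL]) B true
| part_orR : forall p B C, part F p (Or B C) true -> part F (p ++ [dR]) C true
| part_negP : forall p B, part F p (Neg B) true -> part F (p ++ [dN]) B false
| part_negN : forall p B, part F p (Neg B) false -> part F (p ++ [dN]) B true.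

Definition pos_part (B F : form) : Prop := exists p, part F p B true.
Definition neg_part (B F : form) : Prop := exists p, part F p B false.

Definition prefix (p q : path) : Prop := exists r, q = p ++ r.
Definition nonoverlap (p q : path) : Prop := ~ prefix p q /\ ~ prefix q p.

Definition rule_or (G G1 G2 : form) : Prop :=
  exists p B C, part G p (Or B C) false /\ G1 = Or G (Neg B) /\ G2 = Or G (Neg C).

Definition rule_eps (G G' : form) : Prop :=
  (exists p a b, part G p (Eps a b) false /\ G' = Or G (Neg (Eps a a)))
  \/ (exists p q a b c, part G p (Eps a b) false /\ part G q (Eps b c) false
        /\ nonoverlap p q /\ G' = Or G (Neg (Eps a c)))
  \/ (exists p q a b, part G p (Eps a b) false /\ part G q (Eps b b) false
        /\ nonoverlap p q /\ G' = Or G (Neg (Eps b a))).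

Inductive tree : Type :=
| Leaf : form -> tree
| Node1 : form -> tree -> tree
| Node2 : form -> tree -> tree -> tree.

Definition label (t : tree) : form :=
  match t with Leaf C => C | Node1 C _ => C | Node2 C _ _ => C end.

Fixpoint tableau_ok (t : tree) : Prop :=
  match t with
  | Leaf _ => True
  | Node1 C t1 => rule_eps C (label t1) /\ tableau_ok t1
  | Node2 C t1 t2 => rule_or C (label t1) (label t2) /\ tableau_ok t1 /\ tableau_ok t2
  end.

Definition tableau_for (A : form) (t : tree) : Prop := label t = A /\ tableau_ok t.

Inductive branch : tree -> list form -> Prop :=
| br_leaf : forall C, branch (Leaf C) [C]
| br_node1 : forall C t cs, branch t cs -> branch (Node1 C t) (C :: cs)
| br_node2l : forall C t1 t2 cs, branch t1 cs -> branch (Node2 C t1 t2) (C :: cs)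
| br_node2r : forall C t1 t2 cs, branch t2 cs -> branch (Node2 C t1 t2) (C :: cs).

Definition hintikka (H : form) : Prop :=
  (~ exists B p q, part H p B true /\ part H q B false /\ nonoverlap p q)
  /\ (forall B C, neg_part (Or B C) H -> neg_part B H \/ neg_part C H)
  /\ (forall a b, neg_part (Eps a b) H -> neg_part (Eps a a) H)
  /\ (forall a b c, neg_part (Eps a b) H -> neg_part (Eps b c) H -> neg_part (Eps a c) H)
  /\ (forall a b, neg_part (Eps a b) H -> neg_part (Eps b b) H -> neg_part (Eps b a) H).

(* disjunctions (associated in any way) of atomic or negated atomic formulas;
   a single literal counts as a (one-member) disjunction *)
Inductive lit_disj : form -> Prop :=
| ld_eps : forall a b, lit_disj (Eps a b)
| ld_neps : forall a b, lit_disj (Neg (Eps a b))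
| ld_or : forall A B, lit_disj A -> lit_disj B -> lit_disj (Or A B).

Fixpoint subst (s : nat -> nat) (A : form) : form :=
  match A with
  | Eps a b => Eps (s a) (s b)
  | Or B C => Or (subst s B) (subst s C)
  | Neg B => Neg (subst s B)
  end.

Inductive refutH (a0 : nat) : form -> Prop :=
| rH_eps : refutH a0 (Eps a0 a0)
| rH_neps : refutH a0 (Neg (Eps a0 a0))
| rH_mp : forall A B, provH (Imp A B) -> refutH a0 B -> refutH a0 A
| rH_subst : forall A B s, refutH a0 A -> A = subst s B -> refutH a0 B
| rH_ext : forall A a b, hintikka A -> lit_disj A -> refutH a0 A ->
    ~ neg_part (Eps a b) A -> refutH a0 (Or A (Eps a b)).

(* Every tableau rule turns a node C into a child C \/ ~X.  Hence C is a
   positive part of its child, |-_H C -> C \/ ~X is a tautology, and a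
   refutation of the child gives one of C by the modus-ponens rule of HAR;
   by downward induction along the branch all three claims reduce to the
   fact that every Hintikka formula H is refutable.

   For that, let N and P be the atoms occurring in H negatively and
   positively.  The disjunction D of the literals ~eps(n), n in N, followed
   by the atoms eps(p), p in P, is refutable: the negative literals alone
   are refuted by substitution from ~eps a0 a0, and each positive literal is
   added by the extension rule of HAR, because every intermediate literal
   disjunction has the same negative atoms as H and is therefore again a
   Hintikka formula.  Finally |-_H H -> D: a valuation falsifying D makes
   N true and P false, and the Hintikka conditions then force every positive
   part of H to be false and every negative part true, so H is false.
   (If N is empty, D is eps a0 a0 followed by the atoms of P.) *)
From Stdlib Require Import List.
From Stdlib Require Import Lia Bool.
Import ListNotations.

(* Unlike [part], paths are built from the root down,
   which makes occurrences easy to decompose by structural recursion. *)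
Inductive occ : bool -> form -> path -> form -> bool -> Prop :=
| occ_root : forall s F, occ s F [] F s
| occ_orL : forall B C p X s, occ true B p X s -> occ true (Or B C) (dL :: p) X s
| occ_orR : forall B C p X s, occ true C p X s -> occ true (Or B C) (dR :: p) X s
| occ_neg : forall s B p X s', occ (negb s) B p X s' -> occ s (Neg B) (dN :: p) X s'.

Lemma occ_trans s F p Y s1 q Z s2 :
  occ s F p Y s1 -> occ s1 Y q Z s2 -> occ s F (p ++ q) Z s2.
Proof.
  induction 1; intros HY; simpl; auto using occ_orL, occ_orR, occ_neg.
Qed.

Lemma occ_suffix s F p X s1 r Y s2 :
  occ s F p X s1 -> occ s F (p ++ r) Y s2 -> occ s1 X r Y s2.
Proof.
  induction 1; simpl; intros HY; auto; inversion HY; subst; auto.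
Qed.

Lemma part_occ F p X s : part F p X s -> occ true F p X s.
Proof.
  induction 1.
  - apply occ_root.
  - eapply occ_trans; [eassumption | apply occ_orL, occ_root].
  - eapply occ_trans; [eassumption | apply occ_orR, occ_root].
  - eapply occ_trans; [eassumption | apply occ_neg, (occ_root false)].
  - eapply occ_trans; [eassumption | apply occ_neg, (occ_root true)].
Qed.

Lemma occ_part_below s F p X s' G q :
  occ s F p X s' -> part G q F s -> part G (q ++ p) X s'.
Proof.
  intros HF; revert G q; induction HF; intros G q HG.
  - rewrite app_nil_r; exact HG.
  - replace (q ++ dL :: p) with ((q ++ [dL]) ++ p) by now rewrite <- app_assoc.
    apply IHHF; eapply part_orL; eassumption.
  - replace (q ++ dR :: p) with ((q ++ [dR]) ++ p) by now rewrite <- app_assoc.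
    apply IHHF; eapply part_orR; eassumption.
  - replace (q ++ dN :: p) with ((q ++ [dN]) ++ p) by now rewrite <- app_assoc.
    apply IHHF; destruct s; [eapply part_negP | eapply part_negN]; eassumption.
Qed.

Lemma part_iff_occ F p X s : part F p X s <-> occ true F p X s.
Proof.
  split; [apply part_occ |].
  intros H; apply (occ_part_below _ _ _ _ _ F []) in H; [exact H | apply part_root].
Qed.

Lemma pos_part_trans X Y Z : pos_part X Y -> pos_part Y Z -> pos_part X Z.
Proof.
  intros [p Hp] [q Hq]; exists (q ++ p).
  apply part_iff_occ in Hp, Hq; apply part_iff_occ; eapply occ_trans; eassumption.
Qed.

Fixpoint fsize (F : form) : nat :=
  match F with
  | Eps _ _ => 1
  | Or B C => S (fsize B + fsize C)
  | Neg B => S (fsize B)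
  end.

Lemma occ_size s F r X s' :
  occ s F r X s' -> fsize X <= fsize F /\ (r <> [] -> fsize X < fsize F).
Proof. induction 1; simpl; split; intros; try lia; congruence. Qed.

(* A formula occurs in itself only at the root, hence with its own sign. *)
Lemma occ_self_sign s B r s' : occ s B r B s' -> s = s'.
Proof.
  intros H; destruct r as [| d r].
  - inversion H; reflexivity.
  - apply occ_size in H as [_ H]; specialize (H ltac:(discriminate)); lia.
Qed.

(* Condition (1) on Hintikka formulas excludes also overlapping occurrences:
   no formula is both a positive and a negative part of a Hintikka formula. *)
Lemma hintikka_no_clash H B : hintikka H -> pos_part B H -> neg_part B H -> False.
Proof.
  intros [Hclash _] [p Hp] [q Hq].
  apply Hclash; exists B, p, q; repeat split; auto;
    apply part_iff_occ in Hp, Hq; intros [r ->].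
  - discriminate (occ_self_sign _ _ _ _ (occ_suffix _ _ _ _ _ _ _ _ Hp Hq)).
  - discriminate (occ_self_sign _ _ _ _ (occ_suffix _ _ _ _ _ _ _ _ Hq Hp)).
Qed.

Fixpoint atoms (s : bool) (F : form) (t : bool) : list (nat * nat) :=
  match F with
  | Eps a b => if Bool.eqb s t then [(a, b)] else []
  | Or B C => if s then atoms true B t ++ atoms true C t else []
  | Neg B => atoms (negb s) B t
  end.

Lemma in_atoms_occ F s t a b :
  In (a, b) (atoms s F t) <-> exists p, occ s F p (Eps a b) t.
Proof.
  revert s; induction F as [c d | B IHB C IHC | B IHB]; intros s; simpl.
  - split.
    + destruct (Bool.eqb s t) eqn:E; simpl; [| tauto].
      intros [Heq | []]; inversion Heq; subst.
      apply Bool.eqb_prop in E; subst; exists []; apply occ_root.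
    + intros [p Hp]; inversion Hp; subst; rewrite Bool.eqb_reflx; now left.
  - destruct s.
    + rewrite in_app_iff, IHB, IHC; split.
      * intros [[p Hp] | [p Hp]]; eexists; [apply occ_orL | apply occ_orR]; eauto.
      * intros [p Hp]; inversion Hp; subst; eauto.
    + split; [simpl; tauto |]; intros [p Hp]; inversion Hp.
  - rewrite IHB; split.
    + intros [p Hp]; exists (dN :: p); apply occ_neg; auto.
    + intros [p Hp]; inversion Hp; subst; eauto.
Qed.

Lemma in_atoms F s a b : In (a, b) (atoms true F s) <-> exists p, part F p (Eps a b) s.
Proof.
  rewrite in_atoms_occ; split; intros [p Hp]; exists p; apply part_iff_occ; auto.
Qed.

Lemma hintikka_eval H v :
  hintikka H ->
  (forall c, In c (atoms true H false) -> v (fst c) (snd c) = true) ->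
  (forall c, In c (atoms true H true) -> v (fst c) (snd c) = false) ->
  forall B p s, part H p B s -> eval v B = negb s.
Proof.
  intros Hh Hneg Hpos B; induction B as [a b | X IHX Y IHY | X IHX]; intros p s HB; simpl.
  - destruct s; [apply (Hpos (a, b)) | apply (Hneg (a, b))]; apply in_atoms; eauto.
  - destruct s.
    + rewrite (IHX (p ++ [dL]) true), (IHY (p ++ [dR]) true); auto.
      * eapply part_orR; eassumption.
      * eapply part_orL; eassumption.
    + destruct Hh as [_ [Hor _]].
      destruct (Hor X Y) as [[q Hq] | [q Hq]]; [exists p; exact HB | |].
      * rewrite (IHX q false Hq); reflexivity.
      * rewrite (IHY q false Hq); apply orb_true_r.
  - destruct s.
    + rewrite (IHX (p ++ [dN]) false); [reflexivity | eapply part_negP; eassumption].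
    + rewrite (IHX (p ++ [dN]) true); [reflexivity | eapply part_negN; eassumption].
Qed.

Lemma hintikka_entails H D :
  hintikka H ->
  (forall v, eval v D = false ->
     (forall c, In c (atoms true H false) -> v (fst c) (snd c) = true) /\
     (forall c, In c (atoms true H true) -> v (fst c) (snd c) = false)) ->
  provH (Imp H D).
Proof.
  intros Hh HD; apply pH_taut; intros v; simpl.
  destruct (eval v D) eqn:E; [apply orb_true_r |].
  destruct (HD v E) as [Hneg Hpos].
  now rewrite (hintikka_eval H v Hh Hneg Hpos H [] true (part_root H)).
Qed.

Definition lit (s : bool) (c : nat * nat) : form :=
  if s then Eps (fst c) (snd c) else Neg (Eps (fst c) (snd c)).

Definition disj (x : form) (l : list form) : form := fold_left Or l x.

Lemma eval_disj v x l : eval v (disj x l) = eval v x || existsb (eval v) l.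
Proof.
  revert x; induction l as [| y l IH]; intros x; simpl.
  - now rewrite orb_false_r.
  - unfold disj in *; simpl; rewrite IH; simpl; now rewrite orb_assoc.
Qed.

Lemma eval_disj_lits_false v x s l :
  eval v (disj x (map (lit s) l)) = false ->
  eval v x = false /\ forall c, In c l -> v (fst c) (snd c) = negb s.
Proof.
  rewrite eval_disj; intros E; apply orb_false_elim in E as [Ex El]; split; auto.
  intros c Hc; destruct (eval v (lit s c)) eqn:Ec.
  - assert (existsb (eval v) (map (lit s) l) = true) by
      (apply existsb_exists; exists (lit s c); auto using in_map).
    congruence.
  - destruct s; simpl in Ec; [exact Ec | now destruct (v (fst c) (snd c))].
Qed.

Lemma subst_disj sg x l : subst sg (disj x l) = disj (subst sg x) (map (subst sg) l).
Proof.
  revert x; induction l as [| y l IH]; intros x; [reflexivity |].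
  unfold disj in *; simpl; now rewrite IH.
Qed.

Lemma lit_disj_lits x s l : lit_disj x -> lit_disj (disj x (map (lit s) l)).
Proof.
  revert x; induction l as [| c l IH]; intros x Hx; simpl; auto.
  apply IH; constructor; [exact Hx | destruct s; constructor].
Qed.

Lemma atoms_disj_lits x s l t :
  atoms true (disj x (map (lit s) l)) t =
  atoms true x t ++ (if Bool.eqb s t then l else []).
Proof.
  revert x; induction l as [| [a b] l IH]; intros x; simpl.
  - destruct (Bool.eqb s t); now rewrite app_nil_r.
  - unfold disj in *; simpl; rewrite IH; simpl; rewrite <- app_assoc.
    destruct s, t; reflexivity.
Qed.

(* Every disjunction of literals of one and the same sign is refuted: it
   is a substitution instance of a disjunction of copies of eps a0 a0 (or of
   ~eps a0 a0), which implies that axiom of HAR. *)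
Lemma refut_same_sign_lits a0 s c l : refutH a0 (disj (lit s c) (map (lit s) l)).
Proof.
  set (sg := fun _ : nat => a0); set (L := lit s (a0, a0)).
  assert (Hsubst : forall d, subst sg (lit s d) = L) by (now destruct s).
  apply rH_subst with (subst sg (disj (lit s c) (map (lit s) l))) sg; [| reflexivity].
  apply rH_mp with L; [| destruct s; constructor].
  apply pH_taut; intros v; simpl.
  destruct (eval v L) eqn:E; [apply orb_true_r |].
  rewrite subst_disj, map_map, (map_ext _ (fun _ => L) Hsubst), eval_disj, Hsubst, E.
  now induction l; simpl; rewrite ?E.
Qed.

Lemma lit_disj_neg_atomic Y p B : lit_disj Y -> part Y p B false -> exists a b, B = Eps a b.
Proof.
  rewrite part_iff_occ; intros HY; revert p B; induction HY; intros p Z HZ;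
    inversion HZ; subst; eauto.
  match goal with H : occ (negb true) _ _ _ _ |- _ => inversion H; subst; eauto end.
Qed.

Definition literal_trace (H Y : form) : Prop :=
  lit_disj Y /\
  (forall c, In c (atoms true Y false) <-> In c (atoms true H false)) /\
  incl (atoms true Y true) (atoms true H true).

Lemma trace_hintikka H Y : hintikka H -> literal_trace H Y -> hintikka Y.
Proof.
  intros Hh [Hlit [Hneg Hpos]].
  assert (NE : forall a b, neg_part (Eps a b) Y <-> neg_part (Eps a b) H).
  { intros a b; unfold neg_part; rewrite <- !in_atoms; apply Hneg. }
  pose proof Hh as [_ [_ [H3 [H4 H5]]]].
  split; [| split; [| split; [| split]]].
  - intros [B [p [q [Hp [Hq _]]]]].
    destruct (lit_disj_neg_atomic Y q B Hlit Hq) as [a [b ->]].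
    apply (hintikka_no_clash H (Eps a b) Hh).
    + apply in_atoms, Hpos, in_atoms; eauto.
    + apply NE; eexists; eauto.
  - intros B C [p Hp]; destruct (lit_disj_neg_atomic Y p _ Hlit Hp) as [? [? E]].
    discriminate.
  - intros a b; rewrite !NE; apply H3.
  - intros a b c; rewrite !NE; apply H4.
  - intros a b; rewrite !NE; apply H5.
Qed.

Lemma trace_extend H Y c :
  literal_trace H Y -> In c (atoms true H true) -> literal_trace H (Or Y (lit true c)).
Proof.
  destruct c as [a b]; intros [Hlit [Hneg Hpos]] Hc; simpl.
  split; [constructor; [exact Hlit | constructor] | split].
  - intros d; simpl; rewrite app_nil_r; apply Hneg.
  - apply incl_app; [exact Hpos | intros d [<- | []]; exact Hc].
Qed.

Lemma refut_extend a0 H Y l :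
  hintikka H -> refutH a0 Y -> literal_trace H Y -> incl l (atoms true H true) ->
  refutH a0 (disj Y (map (lit true) l)).
Proof.
  intros Hh; revert Y; induction l as [| [a b] l IH]; intros Y HY Htr Hl; simpl; auto.
  apply IH.
  - apply rH_ext; [eapply trace_hintikka; eauto | apply Htr | exact HY |].
    intros Hab; apply (hintikka_no_clash H (Eps a b) Hh).
    + apply in_atoms, Hl; now left.
    + apply in_atoms, Htr, in_atoms, Hab.
  - apply (trace_extend H Y (a, b)); [exact Htr | apply Hl; now left].
  - intros d Hd; apply Hl; now right.
Qed.

(* Every Hintikka formula H is refuted in HAR, through a refuted literal
   disjunction D with |-_H H -> D: the positive atoms P of H preceded either
   by eps a0 a0 (no negative atoms) or by the negated negative atoms. *)
Lemma hintikka_refutable a0 H : hintikka H -> refutH a0 H.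
Proof.
  intros Hh.
  set (P := atoms true H true).
  destruct (atoms true H false) as [| n ns] eqn:EN.
  - apply rH_mp with (disj (lit true (a0, a0)) (map (lit true) P));
      [| apply refut_same_sign_lits].
    apply hintikka_entails; [exact Hh |]; intros v Hv; rewrite EN.
    split; [intros c [] | apply (eval_disj_lits_false v _ true P Hv)].
  - set (NegLits := disj (lit false n) (map (lit false) ns)).
    apply rH_mp with (disj NegLits (map (lit true) P)).
    + apply hintikka_entails; [exact Hh |]; intros v Hv.
      apply eval_disj_lits_false in Hv as [Hneg Hpos]; split; [| exact Hpos].
      apply eval_disj_lits_false in Hneg as [Hn Hns].
      rewrite EN; intros c [<- | Hc]; [| now apply Hns].
      simpl in Hn; now destruct (v (fst n) (snd n)).
    + apply (refut_extend a0 H); [exact Hh | apply refut_same_sign_lits | | apply incl_refl].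
      split; [apply lit_disj_lits; constructor | split].
      * intros c; unfold NegLits; rewrite atoms_disj_lits, EN; destruct n; simpl; tauto.
      * unfold NegLits; rewrite atoms_disj_lits; destruct n; intros c [].
Qed.

(* Every tableau rule extends a formula C to a child of the form C \/ ~X. *)
Definition extension (C D : form) : Prop := exists X, D = Or C (Neg X).

Lemma extension_pos_part C D : extension C D -> pos_part C D.
Proof. intros [X ->]; exists ([] ++ [dL]); eapply part_orL, part_root. Qed.

Lemma extension_imp C D : extension C D -> provH (Imp C D).
Proof.
  intros [X ->]; apply pH_taut; intros v; simpl.
  now destruct (eval v C).
Qed.

Lemma rule_eps_extension G G' : rule_eps G G' -> extension G G'.
Proof.
  intros [[p [a [b [_ E]]]] | [[p [q [a [b [c [_ [_ [_ E]]]]]]]] | [p [q [a [b [_ [_ [_ E]]]]]]]]];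
    eexists; exact E.
Qed.

Lemma rule_or_extension G G1 G2 : rule_or G G1 G2 -> extension G G1 /\ extension G G2.
Proof. intros [p [B [C [_ [E1 E2]]]]]; split; eexists; eassumption. Qed.

Lemma branch_head t cs : branch t cs -> exists r, cs = label t :: r.
Proof. induction 1; simpl; eauto. Qed.

Lemma branch_extension t cs d :
  tableau_ok t -> branch t cs ->
  forall i, S i < length cs -> extension (nth i cs d) (nth (S i) cs d).
Proof.
  intros Hok Hbr; revert Hok; induction Hbr as [C | C t cs Hbr IH | C t1 t2 cs Hbr IH
    | C t1 t2 cs Hbr IH]; simpl; intros Hok [| i] Hi; try lia;
    try (apply IH; [apply Hok | lia]);
    destruct (branch_head _ _ Hbr) as [r ->]; simpl.
  - apply rule_eps_extension, Hok.
  - apply (rule_or_extension C _ (label t2)), Hok.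
  - apply (rule_or_extension C (label t1)), Hok.
Qed.

Lemma down_ind (P : nat -> Prop) m :
  P m -> (forall i, i < m -> P (S i) -> P i) -> forall i, i <= m -> P i.
Proof.
  intros Hm Hstep i Hi; remember (m - i) as k eqn:Ek; revert i Hi Ek.
  induction k as [| k IH]; intros i Hi Ek.
  - now replace i with m by lia.
  - apply Hstep; [lia | apply IH; lia].
Qed.

Lemma last_nth (l : list form) d : l <> [] -> last l d = nth (pred (length l)) l d.
Proof.
  induction l as [| x l IH]; intros Hl; [congruence |].
  destruct l as [| y l]; [reflexivity |].
  change (last (x :: y :: l) d) with (last (y :: l) d).
  rewrite IH by discriminate; reflexivity.
Qed.

Theorem lemma3p5 (a0 : nat) (A : form) (t : tree) (cs : list form) :
  tableau_for A t ->
  branch t cs ->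
  hintikka (last cs A) ->
  (forall i, i < length cs -> pos_part (nth i cs A) (last cs A)) /\
  (forall i, S i < length cs -> provH (Imp (nth i cs A) (nth (S i) cs A))) /\
  (forall i, i < length cs -> refutH a0 (nth i cs A)).
Proof.
  intros [_ Hok] Hbr Hh.
  pose proof (branch_extension t cs A Hok Hbr) as Hext.
  destruct (branch_head t cs Hbr) as [r Ecs].
  assert (Hlen : length cs = S (pred (length cs))) by (subst cs; reflexivity).
  rewrite last_nth in * by (subst cs; discriminate).
  set (m := pred (length cs)) in *.
  split; [| split].
  - intros i Hi; apply (down_ind (fun i => pos_part (nth i cs A) (nth m cs A)) m);
      [exists []; apply part_root | | lia].
    intros j Hj Hpos; apply pos_part_trans with (nth (S j) cs A); [| exact Hpos].
    apply extension_pos_part, Hext; lia.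
  - intros i Hi; apply extension_imp, Hext, Hi.
  - intros i Hi; apply (down_ind (fun i => refutH a0 (nth i cs A)) m);
      [apply hintikka_refutable, Hh | | lia].
    intros j Hj Hrefut; apply rH_mp with (nth (S j) cs A); [| exact Hrefut].
    apply extension_imp, Hext; lia.
Qed.
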